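(* Let $A(z)=\sum_{k=0}^{\infty}a_kz^k$ with $a_0\neq 0$ and $H(z)=\sum_{k=1}^{\infty}h_kz^k$ with $h_1\neq 0$ be analytic in a disk $|z|<R$ with $R>1$, with real coefficients. Let the Sheffer polynomials $p_k$ be defined by $A(t)e^{xH(t)}=\sum_{k=0}^{\infty}p_k(x)t^k$ for $|t|<R$, and assume $p_k(x)\ge 0$ for all $x\ge 0$ and all $k$, $A(1)\neq 0$ and $H'(1)=1$. Let $(b_n)$ be a positive increasing sequence with $b_n\to\infty$ and $b_n/n\to 0$, and define $$T_n^*(f;x)=\frac{e^{-\frac{n}{b_n}xH(1)}}{A(1)}\sum_{k=0}^{\infty}p_k\Big(\frac{n}{b_n}x\Big)f\Big(\frac{k}{n}b_n\Big).$$ Let $\rho(x)=1+x^2$. Then for every $f\in C_\rho^k(\mathbb{R}_0^+)$, $$\lim_{n\to\infty}\|T_n^*(f;\cdot)-f\|_\rho=0.$$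
   Context: $\mathbb{R}_0^+=[0,\infty)$. For a function $g$ on $\mathbb{R}_0^+$, $\|g\|_\rho=\sup_{x\ge 0}\frac{|g(x)|}{\rho(x)}$. $B_\rho(\mathbb{R}_0^+)$ is the set of functions $f$ on $\mathbb{R}_0^+$ with $|f(x)|\le M_f\rho(x)$ for all $x\ge0$ and some constant $M_f>0$; $C_\rho(\mathbb{R}_0^+)$ is the set of continuous functions in $B_\rho(\mathbb{R}_0^+)$; and $C_\rho^k(\mathbb{R}_0^+)$ is the set of $f\in C_\rho(\mathbb{R}_0^+)$ for which $\lim_{x\to\infty}\frac{f(x)}{\rho(x)}$ exists and is finite. *)

From Stdlib Require Import Reals Lra.
From Coquelicot Require Import Coquelicot.
Open Scope R_scope.

Definition rho (x : R) : R := 1 + x ^ 2.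

Definition rho_norm (g : R -> R) : Rbar :=
  Lub_Rbar (fun y => exists x, 0 <= x /\ y = Rabs (g x) / rho x).

Definition B_rho (f : R -> R) : Prop :=
  exists M, 0 < M /\ forall x, 0 <= x -> Rabs (f x) <= M * rho x.

Definition C_rho (f : R -> R) : Prop :=
  (forall x, 0 <= x ->
     filterlim f (within (fun y => 0 <= y) (locally x)) (locally (f x)))
  /\ B_rho f.

Definition C_rho_k (f : R -> R) : Prop :=
  C_rho f /\ exists l : R, is_lim (fun x => f x / rho x) p_infty l.

Definition T_star (a h : nat -> R) (p : nat -> R -> R) (b : nat -> R)
    (n : nat) (f : R -> R) (x : R) : R :=
  exp (- (INR n / b n) * x * PSeries h 1) / PSeries a 1
  * Series (fun k => p k (INR n / b n * x) * f (INR k / INR n * b n)).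

From Stdlib Require Import Reals Lra Lia.
From Coquelicot Require Import Coquelicot.
Open Scope R_scope.

(* Write f = g + l rho with l the limit of f / rho at infinity.  Then g is continuous,
   O(rho) and o(rho), which gives for every e > 0 a constant Q with
   |g s - g x| <= e rho(x) + Q (s - x)^2.  The operator T_n^* is a series with
   nonnegative weights summing to 1; differentiating the generating function
   A(t) e^{y H(t)} twice at t = 1 and using H'(1) = 1 shows that its first two
   moments are x + O(b_n/n) and x^2 + O(b_n/n) rho(x).  Hence
   |T_n^* f - f| <= (e + O(b_n/n)) rho, and b_n/n -> 0. *)

Lemma rho_ge_1 x : 1 <= rho x.
Proof. unfold rho. simpl. nra. Qed.

Lemma rho_le_shift s x : rho s <= 2 * rho x + 2 * (s - x) ^ 2.
Proof. unfold rho. simpl. pose proof (pow2_ge_0 (s - 2 * x)). simpl in *. nra. Qed.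

Lemma continuous_rho x : continuous rho x.
Proof. apply (ex_derive_continuous rho). unfold rho. auto_derive. exact I. Qed.

Lemma Rabs_sub_le_rho (u v m s x : R) : 0 <= m ->
  Rabs u <= m * rho s -> Rabs v <= m * rho x ->
  Rabs (u - v) <= m * (3 * rho x + 2 * (s - x) ^ 2).
Proof.
  intros Hm Hu Hv. pose proof (rho_le_shift s x).
  unfold Rminus at 1. eapply Rle_trans; [apply Rabs_triang|]. rewrite Rabs_Ropp. nra.
Qed.

Lemma rho_le_far (d r s x : R) : 0 < d <= 1 -> 1 <= r -> 0 <= x ->
  d <= Rabs (s - x) -> (x <= 2 * r \/ s <= r) ->
  rho x <= (rho (2 * r) / d ^ 2 + 5) * (s - x) ^ 2.
Proof.
  intros Hd Hr Hx Hsx Hcase.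
  assert (Hd2 : d ^ 2 <= (s - x) ^ 2).
  { rewrite <- (pow2_abs (s - x)). apply pow_incr. lra. }
  assert (Hq : 1 <= (s - x) ^ 2 / d ^ 2).
  { apply (Rmult_le_reg_r (d ^ 2)); [apply pow_lt; lra|].
    unfold Rdiv. rewrite Rmult_assoc, Rinv_l by (apply pow_nonzero; lra). lra. }
  replace ((rho (2 * r) / d ^ 2 + 5) * (s - x) ^ 2)
    with (rho (2 * r) * ((s - x) ^ 2 / d ^ 2) + 5 * (s - x) ^ 2)
    by (field; lra).
  pose proof (rho_ge_1 (2 * r)). pose proof (pow2_ge_0 (s - x)).
  destruct (Rle_lt_dec x (2 * r)) as [Hx2 | Hx2].
  - assert (rho x <= rho (2 * r)) by (unfold rho; simpl; nra). nra.
  - destruct Hcase as [|Hs]; [lra|].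
    assert (rho x <= 5 * (s - x) ^ 2) by (unfold rho; simpl; nra).
    assert (0 <= rho (2 * r) * ((s - x) ^ 2 / d ^ 2)) by nra. lra.
Qed.

Lemma Rabs_scaled_quadratic_le (c x u v : R) : 0 < c <= 1 -> 0 <= x ->
  Rabs (c * x * v + c ^ 2 * u) <= c * rho x * (Rabs u + Rabs v).
Proof.
  intros Hc Hx. pose proof (rho_ge_1 x).
  assert (x <= rho x) by (unfold rho; simpl; nra).
  eapply Rle_trans; [apply Rabs_triang|].
  rewrite !Rabs_mult, (Rabs_pos_eq c), (Rabs_pos_eq x), (Rabs_pos_eq (c ^ 2))
    by (try apply pow_le; lra).
  assert (c ^ 2 <= c * rho x) by (simpl; nra).
  assert (c * x <= c * rho x) by nra.
  pose proof (Rabs_pos u). pose proof (Rabs_pos v). nra.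
Qed.

Lemma quadratic_moment_error_le (e Q l c x alpha delta gamma : R) : 0 < c <= 1 -> 0 <= x ->
  e * rho x + Q * (c * x * delta + c ^ 2 * gamma)
  + Rabs l * Rabs (c * x * (2 * alpha + delta) + c ^ 2 * gamma)
  <= (e + c * (Rabs Q * (Rabs gamma + Rabs delta)
               + Rabs l * (Rabs gamma + Rabs (2 * alpha + delta)))) * rho x.
Proof.
  intros Hc Hx.
  pose proof (Rabs_scaled_quadratic_le c x gamma delta Hc Hx).
  pose proof (Rabs_scaled_quadratic_le c x gamma (2 * alpha + delta) Hc Hx).
  pose proof (Rabs_pos Q). pose proof (Rabs_pos l).
  assert (Q * (c * x * delta + c ^ 2 * gamma) <= Rabs Q * (c * rho x * (Rabs gamma + Rabs delta))).
  { eapply Rle_trans; [apply Rle_abs|]. rewrite Rabs_mult. apply Rmult_le_compat_l; lra. }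
  assert (Rabs l * Rabs (c * x * (2 * alpha + delta) + c ^ 2 * gamma)
          <= Rabs l * (c * rho x * (Rabs gamma + Rabs (2 * alpha + delta)))).
  { apply Rmult_le_compat_l; lra. }
  nra.
Qed.

Lemma rho_norm_le (g : R -> R) (e : R) :
  (forall x, 0 <= x -> Rabs (g x) <= e * rho x) -> Rbar_le (rho_norm g) e.
Proof.
  intros Hg. apply Lub_Rbar_correct. intros z [x [Hx ->]].
  apply Rle_div_l; [pose proof (rho_ge_1 x); lra | auto].
Qed.

(* Coquelicot's series lemmas specialized to [R], so that [ring] applies to their premises. *)
Lemma is_series_Rext (u v : nat -> R) (l : R) :
  (forall k, u k = v k) -> is_series u l -> is_series v l.
Proof. apply is_series_ext. Qed.

Lemma is_series_Rplus (u v : nat -> R) (lu lv : R) :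
  is_series u lu -> is_series v lv -> is_series (fun k => u k + v k) (lu + lv).
Proof. exact (is_series_plus u v lu lv). Qed.

Lemma is_series_Rscal (c : R) (u : nat -> R) (l : R) :
  is_series u l -> is_series (fun k => c * u k) (c * l).
Proof. exact (is_series_scal c u l). Qed.

Lemma is_series_nonneg (u : nat -> R) (l : R) :
  (forall k, 0 <= u k) -> is_series u l -> 0 <= l.
Proof.
  intros Hu Su. rewrite <- (is_series_unique _ _ Su), <- (Rmult_0_l (Series u)), <- Series_scal_l.
  apply Series_le; [intros k; rewrite Rmult_0_l; split; [lra | apply Hu] | eexists; exact Su].
Qed.

Lemma CV_radius_ge (q : nat -> R) (r : R) :
  (forall t, 0 <= t < r -> ex_series (fun k => q k * t ^ k)) ->
  Rbar_le r (CV_radius q).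
Proof.
  intros Hq. apply Rbar_not_lt_le. intros Hlt.
  assert (Hc : exists c, 0 <= c /\ c < r /\ Rbar_lt (CV_radius q) c).
  { pose proof (CV_radius_ge_0 q) as H0. destruct (CV_radius q) as [c| |]; simpl in *; try easy.
    exists ((c + r) / 2). repeat split; lra. }
  destruct Hc as [c [Hc0 [Hcr Hqc]]].
  apply (CV_disk_outside q c); [now rewrite Rabs_pos_eq|].
  apply ex_series_lim_0, Hq. lra.
Qed.

Lemma is_series_PSeries (q : nat -> R) (t : R) :
  Rbar_lt (Rabs t) (CV_radius q) -> is_series (fun k => q k * t ^ k) (PSeries q t).
Proof.
  intros H. generalize (PSeries_correct q t (CV_radius_inside q t H)).
  apply is_series_ext. intros k. rewrite pow_n_pow. apply Rmult_comm.
Qed.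

Lemma locally_Rabs_lt (x r : R) : Rabs x < r -> locally x (fun t => Rabs t < r).
Proof.
  intros H. assert (Hp : 0 < r - Rabs x) by lra. exists (mkposreal _ Hp). intros t Ht.
  change (Rabs (t - x) < r - Rabs x) in Ht.
  pose proof (Rabs_triang_inv t x). lra.
Qed.

Lemma weighted_series_deviation_le (w t : nat -> R) (g : R -> R) (x M P Q M1 M2 : R) :
  (forall k, 0 <= w k) -> (forall k, 0 <= t k) ->
  is_series w 1 -> is_series (fun k => w k * t k) M1 ->
  is_series (fun k => w k * t k ^ 2) M2 ->
  (forall s, 0 <= s -> Rabs (g s) <= M * rho s) ->
  (forall s, 0 <= s -> Rabs (g s - g x) <= P + Q * (s - x) ^ 2) ->
  ex_series (fun k => w k * g (t k)) /\
  Rabs (Series (fun k => w k * g (t k)) - g x) <= P + Q * (M2 - 2 * x * M1 + x ^ 2).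
Proof.
  intros Hw Ht S0 S1 S2 Hg Hmod.
  assert (Eg : ex_series (fun k => w k * g (t k))).
  { apply (@ex_series_le R_AbsRing R_CompleteNormedModule _ (fun k => M * (w k + w k * t k ^ 2))).
    - intros k. change (Rabs (w k * g (t k)) <= M * (w k + w k * t k ^ 2)).
      rewrite Rabs_mult, (Rabs_pos_eq (w k)) by auto.
      replace (M * (w k + w k * t k ^ 2)) with (w k * (M * rho (t k))) by (unfold rho; ring).
      apply Rmult_le_compat_l; auto.
    - eexists. apply is_series_Rscal, is_series_Rplus; eassumption. }
  split; [exact Eg|].
  set (bound := fun k => w k * (P + Q * (t k - x) ^ 2)).
  assert (Sb : is_series bound (P + Q * (M2 - 2 * x * M1 + x ^ 2))).
  { assert (S := is_series_Rplus _ _ _ _ (is_series_Rscal P _ _ S0)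
      (is_series_Rscal Q _ _ (is_series_Rplus _ _ _ _
        (is_series_Rplus _ _ _ _ S2 (is_series_Rscal (-2 * x) _ _ S1))
        (is_series_Rscal (x ^ 2) _ _ S0)))).
    replace (P + Q * (M2 - 2 * x * M1 + x ^ 2)) with
      (P * 1 + Q * (M2 + -2 * x * M1 + x ^ 2 * 1)) by ring.
    revert S. apply is_series_Rext. intros k. unfold bound. ring. }
  assert (Sgx : is_series (fun k => w k * g x) (g x)).
  { assert (S := is_series_Rscal (g x) _ _ S0). rewrite Rmult_1_r in S.
    revert S. apply is_series_Rext. intros k. apply Rmult_comm. }
  assert (Hdev : Series (fun k => w k * (g (t k) - g x)) =
                 Series (fun k => w k * g (t k)) - g x).
  { erewrite Series_ext by (intros k; apply Rmult_minus_distr_l).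
    rewrite Series_minus by first [exact Eg | eexists; exact Sgx].
    now rewrite (is_series_unique _ _ Sgx). }
  assert (Hle : forall k, Rabs (w k * (g (t k) - g x)) <= bound k).
  { intros k. unfold bound. rewrite Rabs_mult, (Rabs_pos_eq (w k)) by auto.
    apply Rmult_le_compat_l; auto. }
  rewrite <- Hdev, <- (is_series_unique _ _ Sb).
  assert (Ea : ex_series (fun k => Rabs (w k * (g (t k) - g x)))).
  { apply (@ex_series_le R_AbsRing R_CompleteNormedModule _ bound); [|eexists; exact Sb].
    intros k. change (Rabs (Rabs (w k * (g (t k) - g x))) <= bound k).
    rewrite Rabs_Rabsolu. apply Hle. }
  eapply Rle_trans; [apply Series_Rabs, Ea|].
  apply Series_le; [|eexists; exact Sb].
  intros k. split; [apply Rabs_pos | apply Hle].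
Qed.

Lemma weighted_series_error_le (w t : nat -> R) (f : R -> R) (x l M P Q M1 M2 : R) :
  (forall k, 0 <= w k) -> (forall k, 0 <= t k) ->
  is_series w 1 -> is_series (fun k => w k * t k) M1 ->
  is_series (fun k => w k * t k ^ 2) M2 ->
  (forall s, 0 <= s -> Rabs (f s - l * rho s) <= M * rho s) ->
  (forall s, 0 <= s ->
     Rabs (f s - l * rho s - (f x - l * rho x)) <= P + Q * (s - x) ^ 2) ->
  Rabs (Series (fun k => w k * f (t k)) - f x)
    <= P + Q * (M2 - 2 * x * M1 + x ^ 2) + Rabs l * Rabs (M2 - x ^ 2).
Proof.
  intros Hw Ht S0 S1 S2 Hg Hmod.
  set (g := fun s => f s - l * rho s).
  destruct (weighted_series_deviation_le w t g x M P Q M1 M2) as [Eg Hdev]; auto.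
  assert (Srho : is_series (fun k => w k * rho (t k)) (1 + M2)).
  { assert (S := is_series_Rplus _ _ _ _ S0 S2).
    revert S. apply is_series_Rext. intros k. unfold rho. ring. }
  assert (Hf : Series (fun k => w k * f (t k)) = Series (fun k => w k * g (t k)) + l * (1 + M2)).
  { rewrite <- (is_series_unique _ _ Srho), <- Series_scal_l, <- Series_plus;
      [| exact Eg | eexists; apply is_series_Rscal; exact Srho].
    apply Series_ext. intros k. unfold g. ring. }
  assert (Hsplit : Series (fun k => w k * f (t k)) - f x =
    (Series (fun k => w k * g (t k)) - g x) + l * (M2 - x ^ 2))
    by (rewrite Hf; unfold g, rho; ring).
  rewrite Hsplit. eapply Rle_trans; [apply Rabs_triang|].
  rewrite Rabs_mult. lra.
Qed.

Lemma C_rho_sub_scal_rho (f : R -> R) (l : R) :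
  C_rho f -> C_rho (fun s => f s - l * rho s).
Proof.
  intros [Hc [M [HM Hb]]]. split.
  - intros x Hx.
    apply (filterlim_comp_2 (H := locally (opp (l * rho x))) f (fun s => opp (l * rho s)) plus
      (Hc x Hx)); [|exact (@filterlim_plus R_AbsRing R_NormedModule (f x) (opp (l * rho x)))].
    apply (filterlim_filter_le_1 _ (filter_le_within (F := locally x) (fun y => 0 <= y))).
    eapply filterlim_comp; [|exact (@filterlim_opp R_AbsRing R_NormedModule (l * rho x))].
    apply (filterlim_comp _ _ _ rho (Rmult l) _ (locally (rho x))); [apply continuous_rho|].
    apply (continuous_mult (fun _ => l) (fun s => s));
      [apply continuous_const | apply continuous_id].
  - exists (M + Rabs l). split; [pose proof (Rabs_pos l); lra|].
    intros s Hs. pose proof (Hb s Hs). pose proof (rho_ge_1 s).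
    unfold Rminus. eapply Rle_trans; [apply Rabs_triang|].
    rewrite Rabs_Ropp, Rabs_mult, (Rabs_pos_eq (rho s)) by lra. lra.
Qed.

Lemma C_rho_k_sub_limit (f : R -> R) : C_rho_k f ->
  exists l, C_rho (fun s => f s - l * rho s) /\
            is_lim (fun s => (f s - l * rho s) / rho s) p_infty 0.
Proof.
  intros [Hf [l Hl]]. exists l. split; [now apply C_rho_sub_scal_rho|].
  replace (Finite 0) with (Rbar_minus l l) by (simpl; f_equal; ring).
  apply (is_lim_ext (fun s => f s / rho s - l)).
  - intros s. field. pose proof (rho_ge_1 s). lra.
  - apply is_lim_minus'; [exact Hl | apply is_lim_const].
Qed.

Lemma uniform_continuity_nonneg (g : R -> R) (c : R) :
  (forall x, 0 <= x -> filterlim g (within (fun y => 0 <= y) (locally x)) (locally (g x))) ->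
  uniform_continuity g (fun s => 0 <= s <= c).
Proof.
  intros Hg.
  assert (Habs : forall x, 0 <= x <= c -> continuity_pt (fun s => g (Rabs s)) x).
  { intros x Hx. apply continuity_pt_filterlim. rewrite (Rabs_pos_eq x) by lra.
    eapply filterlim_comp; [|apply Hg; lra].
    intros P [eps HP]. exists eps. intros y Hy. apply HP; [|apply Rabs_pos].
    change (Rabs (Rabs y - x) < eps). change (Rabs (y - x) < eps) in Hy.
    pose proof (Rabs_triang_inv2 y x). rewrite (Rabs_pos_eq x) in * by lra. lra. }
  intros eps. destruct (Heine _ _ (compact_P3 0 c) Habs eps) as [d Hd].
  exists d. intros x y Hx Hy Hxy. specialize (Hd x y Hx Hy Hxy).
  rewrite (Rabs_pos_eq x), (Rabs_pos_eq y) in Hd by lra. exact Hd.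
Qed.

Lemma is_lim_div_rho_0_tail (g : R -> R) : is_lim (fun s => g s / rho s) p_infty 0 ->
  forall e, 0 < e -> exists R1, forall s, R1 < s -> Rabs (g s) <= e * rho s.
Proof.
  intros Hlim e He. apply is_lim_spec in Hlim. destruct (Hlim (mkposreal e He)) as [R1 HR1].
  exists R1. intros s Hs. specialize (HR1 s Hs). simpl in HR1. rewrite Rminus_0_r in HR1.
  pose proof (rho_ge_1 s).
  replace (g s) with (g s / rho s * rho s) by (field; lra).
  rewrite Rabs_mult, (Rabs_pos_eq (rho s)) by lra. nra.
Qed.

Lemma C_rho_quadratic_modulus (g : R -> R) :
  C_rho g -> is_lim (fun s => g s / rho s) p_infty 0 ->
  forall e, 0 < e -> exists Q, forall s x, 0 <= s -> 0 <= x ->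
    Rabs (g s - g x) <= e * rho x + Q * (s - x) ^ 2.
Proof.
  intros [Hc [M [HM Hb]]] Hlim e He.
  set (e' := e / 3). assert (He' : 0 < e') by (unfold e'; lra).
  destruct (is_lim_div_rho_0_tail g Hlim e' He') as [R1 Htail].
  set (r := Rmax R1 1 + 1).
  assert (Hr : R1 < r /\ 1 <= r)
    by (unfold r; pose proof (Rmax_l R1 1); pose proof (Rmax_r R1 1); lra).
  destruct (uniform_continuity_nonneg g (2 * r) Hc (mkposreal e' He')) as [[delta Hdelta] Hunif].
  simpl in Hunif.
  set (d := Rmin delta 1).
  assert (Hd : 0 < d <= 1) by (unfold d; split; [apply Rmin_glb_lt | apply Rmin_r]; lra).
  assert (Hdd : d <= delta) by apply Rmin_l.
  set (K := rho (2 * r) / d ^ 2 + 5).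
  assert (HK : 0 <= K).
  { unfold K. pose proof (rho_ge_1 (2 * r)).
    assert (0 <= rho (2 * r) / d ^ 2) by (apply Rdiv_le_0_compat; [lra | apply pow_lt; lra]). lra. }
  (* Tail pairs cost 2 e' (s - x)^2,
     distant pairs M (3 rho x + 2 (s - x)^2) <= M (3 K + 2) (s - x)^2. *)
  exists (2 * e' + M * (3 * K + 2)). intros s x Hs Hx.
  pose proof (rho_ge_1 x). pose proof (pow2_ge_0 (s - x)).
  assert (HMK : 0 <= M * (3 * K + 2) * (s - x) ^ 2) by (apply Rmult_le_pos; nra).
  assert (Hab : s - x <= Rabs (s - x) /\ x - s <= Rabs (s - x)).
  { rewrite Rabs_minus_sym at 2. split; apply Rle_abs. }
  assert (Hcases : (r < s /\ r < x) \/ (s <= 2 * r /\ x <= 2 * r /\ Rabs (s - x) < delta)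
                 \/ (d <= Rabs (s - x) /\ (x <= 2 * r \/ s <= r))).
  { destruct (Rlt_le_dec r s), (Rlt_le_dec r x), (Rle_lt_dec s (2 * r)),
      (Rle_lt_dec x (2 * r)), (Rlt_le_dec (Rabs (s - x)) delta);
    first [left; split; lra | right; left; repeat split; lra
          | right; right; split; [lra | first [left; lra | right; lra]]]. }
  destruct Hcases as [[Hrs Hrx] | [[Hs2 [Hx2 Hnear]] | [Hfar Hcase]]].
  - assert (Rabs (g s - g x) <= e' * (3 * rho x + 2 * (s - x) ^ 2)).
    { apply Rabs_sub_le_rho; [lra | apply Htail | apply Htail]; lra. }
    unfold e' in *. nra.
  - assert (Rabs (g s - g x) < e') by (apply Hunif; lra).
    unfold e' in *. nra.
  - assert (rho x <= K * (s - x) ^ 2) by (apply rho_le_far; lra).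
    assert (Rabs (g s - g x) <= M * (3 * rho x + 2 * (s - x) ^ 2))
      by (apply Rabs_sub_le_rho; auto; lra).
    assert (0 <= e' * (s - x) ^ 2) by nra. nra.
Qed.

Definition sheffer_weight (a h : nat -> R) (p : nat -> R -> R) (y : R) (k : nat) : R :=
  exp (- (y * PSeries h 1)) / PSeries a 1 * p k y.

Section Sheffer.

Variables (a h : nat -> R) (R0 : R) (p : nat -> R -> R).
Hypothesis HR0 : 1 < R0.
Hypothesis Ha_rad : Rbar_le R0 (CV_radius a).
Hypothesis Hh_rad : Rbar_le R0 (CV_radius h).
Hypothesis Hp_gen : forall x t, Rabs t < R0 ->
  is_series (fun k => p k x * t ^ k) (PSeries a t * exp (x * PSeries h t)).

Let lt_radius (c : Rbar) t : Rbar_le R0 c -> Rabs t < R0 -> Rbar_lt (Rabs t) c.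
Proof. intros Hc Ht. destruct c; simpl in *; auto; lra. Qed.

Lemma sheffer_CV_radius y : Rbar_le R0 (CV_radius (fun k => p k y)).
Proof.
  apply CV_radius_ge. intros t Ht. eexists. apply Hp_gen. rewrite Rabs_pos_eq; lra.
Qed.

Lemma sheffer_PSeries y t : Rabs t < R0 ->
  PSeries (fun k => p k y) t = PSeries a t * exp (y * PSeries h t).
Proof.
  intros Ht. exact (is_series_unique _ _ (Hp_gen y t Ht)).
Qed.

Lemma sheffer_PSeries_derive y t : Rabs t < R0 ->
  PSeries (PS_derive (fun k => p k y)) t =
  PSeries (PS_derive a) t * exp (y * PSeries h t)
  + PSeries a t * (y * PSeries (PS_derive h) t * exp (y * PSeries h t)).
Proof.
  intros Ht. rewrite <- (Derive_PSeries _ _ (lt_radius _ _ (sheffer_CV_radius y) Ht)).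
  rewrite (Derive_ext_loc _ (fun t => PSeries a t * exp (y * PSeries h t))).
  - apply is_derive_unique. auto_derive.
    + repeat split; apply ex_derive_PSeries; now apply lt_radius.
    + rewrite !Derive_PSeries by now apply lt_radius. ring.
  - apply (filter_imp (fun s => Rabs s < R0)); [apply sheffer_PSeries|].
    now apply locally_Rabs_lt.
Qed.

Let inside_at_1 (c : nat -> R) : Rbar_le R0 (CV_radius c) ->
  Rbar_lt (Rabs 1) (CV_radius (PS_derive (PS_derive c))) /\
  Rbar_lt (Rabs 1) (CV_radius (PS_derive c)) /\ Rbar_lt (Rabs 1) (CV_radius c).
Proof.
  intros Hc. assert (H1 : Rabs 1 < R0) by (rewrite Rabs_R1; exact HR0).
  rewrite !CV_radius_derive. split; [|split]; now apply lt_radius.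
Qed.

Lemma sheffer_PSeries_derive2 y :
  PSeries (PS_derive (PS_derive (fun k => p k y))) 1 =
  (PSeries (PS_derive (PS_derive a)) 1
   + 2 * PSeries (PS_derive a) 1 * y * PSeries (PS_derive h) 1
   + PSeries a 1 * (y * PSeries (PS_derive (PS_derive h)) 1
                    + (y * PSeries (PS_derive h) 1) ^ 2)) * exp (y * PSeries h 1).
Proof.
  assert (Hq := inside_at_1 _ (sheffer_CV_radius y)).
  assert (Ha := inside_at_1 _ Ha_rad). assert (Hh := inside_at_1 _ Hh_rad).
  rewrite <- Derive_PSeries by tauto.
  rewrite (Derive_ext_loc _ (fun t => PSeries (PS_derive a) t * exp (y * PSeries h t)
      + PSeries a t * (y * PSeries (PS_derive h) t * exp (y * PSeries h t)))).
  - apply is_derive_unique. auto_derive.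
    + repeat split; apply ex_derive_PSeries; tauto.
    + rewrite !Derive_PSeries by tauto. ring.
  - apply (filter_imp (fun s => Rabs s < R0)); [apply sheffer_PSeries_derive|].
    apply locally_Rabs_lt. rewrite Rabs_R1. exact HR0.
Qed.

Lemma sheffer_moment0 y :
  is_series (fun k => p k y) (PSeries a 1 * exp (y * PSeries h 1)).
Proof.
  assert (S := Hp_gen y 1 ltac:(rewrite Rabs_R1; exact HR0)).
  revert S. apply is_series_ext.
  intros k. simpl. rewrite pow1. apply Rmult_1_r.
Qed.

Lemma sheffer_moment1 y :
  is_series (fun k => INR k * p k y)
    ((PSeries (PS_derive a) 1 + PSeries a 1 * y * PSeries (PS_derive h) 1)
     * exp (y * PSeries h 1)).
Proof.
  assert (Hq : Rbar_lt (Rabs 1) (CV_radius (PS_derive (fun k => p k y)))).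
  { apply (inside_at_1 _ (sheffer_CV_radius y)). }
  pose proof (is_series_PSeries _ _ Hq) as S.
  rewrite sheffer_PSeries_derive in S by (rewrite Rabs_R1; exact HR0).
  apply is_series_decr_1.
  replace (plus _ _) with (PSeries (PS_derive a) 1 * exp (y * PSeries h 1)
    + PSeries a 1 * (y * PSeries (PS_derive h) 1 * exp (y * PSeries h 1)))
    by (unfold plus, opp; simpl; ring).
  revert S. apply is_series_ext.
  intros k. unfold PS_derive. rewrite pow1. apply Rmult_1_r.
Qed.

Lemma sheffer_moment2 y :
  is_series (fun k => INR k * (INR k - 1) * p k y)
    ((PSeries (PS_derive (PS_derive a)) 1
      + 2 * PSeries (PS_derive a) 1 * y * PSeries (PS_derive h) 1
      + PSeries a 1 * (y * PSeries (PS_derive (PS_derive h)) 1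
                       + (y * PSeries (PS_derive h) 1) ^ 2)) * exp (y * PSeries h 1)).
Proof.
  assert (Hq : Rbar_lt (Rabs 1) (CV_radius (PS_derive (PS_derive (fun k => p k y))))).
  { apply (inside_at_1 _ (sheffer_CV_radius y)). }
  pose proof (is_series_PSeries _ _ Hq) as S.
  rewrite sheffer_PSeries_derive2 in S.
  do 2 apply is_series_decr_1.
  match goal with |- is_series _ (plus (plus ?l _) _) =>
    replace (plus (plus l _) _) with l by (unfold plus, opp; simpl; ring) end.
  revert S. apply is_series_ext.
  intros k. unfold PS_derive. rewrite pow1, !S_INR. simpl. ring.
Qed.

Hypothesis Hp_nonneg : forall k x, 0 <= x -> 0 <= p k x.
Hypothesis HA1 : PSeries a 1 <> 0.
Hypothesis HH'1 : is_derive (PSeries h) 1 1.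

Lemma sheffer_A1_pos : 0 < PSeries a 1.
Proof.
  assert (S := sheffer_moment0 0).
  rewrite Rmult_0_l, exp_0, Rmult_1_r in S.
  apply is_series_nonneg in S; [lra | intros k; apply Hp_nonneg; lra].
Qed.

Let H'1 : PSeries (PS_derive h) 1 = 1.
Proof.
  rewrite <- Derive_PSeries; [exact (is_derive_unique _ _ _ HH'1)|].
  destruct (CV_radius h); simpl in *; rewrite ?Rabs_R1; auto; lra.
Qed.

Let normalize y (u : nat -> R) l :
  is_series (fun k => u k * p k y) (l * exp (y * PSeries h 1)) ->
  is_series (fun k => sheffer_weight a h p y k * u k) (l / PSeries a 1).
Proof.
  intros S. apply (is_series_Rscal (exp (- (y * PSeries h 1)) / PSeries a 1)) in S.
  replace (l / PSeries a 1) with (exp (- (y * PSeries h 1)) / PSeries a 1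
    * (l * exp (y * PSeries h 1)))
    by (rewrite exp_Ropp; field; split; first [exact HA1 | apply exp_neq_0]).
  revert S. apply is_series_Rext. intros k. unfold sheffer_weight. ring.
Qed.

Lemma sheffer_weight_sum y : is_series (sheffer_weight a h p y) 1.
Proof.
  replace 1 with (PSeries a 1 / PSeries a 1) by (field; auto).
  apply (is_series_Rext (fun k => sheffer_weight a h p y k * 1)); [intros k; ring|].
  apply normalize. assert (S := sheffer_moment0 y).
  revert S. apply is_series_Rext. intros k. ring.
Qed.

Lemma sheffer_weight_mean y :
  is_series (fun k => sheffer_weight a h p y k * INR k) (y + PSeries (PS_derive a) 1 / PSeries a 1).
Proof.
  replace (y + _) with ((PSeries (PS_derive a) 1 + PSeries a 1 * y * PSeries (PS_derive h) 1)
    / PSeries a 1) by (rewrite H'1; field; auto).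
  apply normalize. assert (S := sheffer_moment1 y).
  revert S. apply is_series_Rext. intros k. ring.
Qed.

Lemma sheffer_weight_second y :
  is_series (fun k => sheffer_weight a h p y k * INR k ^ 2)
    (y ^ 2 + (2 * (PSeries (PS_derive a) 1 / PSeries a 1)
              + PSeries (PS_derive (PS_derive h)) 1 + 1) * y
     + (PSeries (PS_derive (PS_derive a)) 1 + PSeries (PS_derive a) 1) / PSeries a 1).
Proof.
  assert (S := is_series_Rplus _ _ _ _ (sheffer_moment2 y) (sheffer_moment1 y)).
  rewrite <- Rmult_plus_distr_r, H'1 in S.
  match goal with |- is_series _ ?l => replace l with
    ((PSeries (PS_derive (PS_derive a)) 1 + 2 * PSeries (PS_derive a) 1 * y * 1
      + PSeries a 1 * (y * PSeries (PS_derive (PS_derive h)) 1 + (y * 1) ^ 2)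
      + (PSeries (PS_derive a) 1 + PSeries a 1 * y * 1)) / PSeries a 1)
    by (field; auto) end.
  apply (normalize y (fun k => INR k ^ 2)).
  revert S. apply is_series_Rext. intros k. ring.
Qed.

Variable b : nat -> R.
Hypothesis Hb_pos : forall n, 0 < b n.

Lemma T_star_eq_weighted_series (f : R -> R) n x :
  T_star a h p b n f x =
  Series (fun k => sheffer_weight a h p (INR n / b n * x) k * f (INR k * (b n / INR n))).
Proof.
  unfold T_star, sheffer_weight. rewrite <- Series_scal_l. apply Series_ext. intros k.
  replace (- (INR n / b n) * x * PSeries h 1) with (- (INR n / b n * x * PSeries h 1)) by ring.
  replace (INR k / INR n * b n) with (INR k * (b n / INR n)) by (unfold Rdiv; ring).
  ring.
Qed.

Lemma T_star_error_le (f : R -> R) : C_rho_k f ->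
  forall e, 0 < e -> exists K, 0 <= K /\ forall n x, (0 < n)%nat -> b n / INR n <= 1 ->
    0 <= x -> Rabs (T_star a h p b n f x - f x) <= (e + b n / INR n * K) * rho x.
Proof.
  intros Hf e He.
  destruct (C_rho_k_sub_limit f Hf) as [l [Hg Hlim]].
  destruct (C_rho_quadratic_modulus _ Hg Hlim e He) as [Q HQ].
  destruct Hg as [_ [M [_ HM]]].
  set (alpha := PSeries (PS_derive a) 1 / PSeries a 1).
  set (delta := PSeries (PS_derive (PS_derive h)) 1 + 1).
  set (gamma := (PSeries (PS_derive (PS_derive a)) 1 + PSeries (PS_derive a) 1) / PSeries a 1).
  exists (Rabs Q * (Rabs gamma + Rabs delta) + Rabs l * (Rabs gamma + Rabs (2 * alpha + delta))).
  split.
  { pose proof (Rabs_pos Q). pose proof (Rabs_pos l). pose proof (Rabs_pos gamma).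
    pose proof (Rabs_pos delta). pose proof (Rabs_pos (2 * alpha + delta)). nra. }
  intros n x Hn Hc1 Hx.
  pose proof (lt_0_INR _ Hn). pose proof (Hb_pos n). pose proof sheffer_A1_pos.
  rewrite T_star_eq_weighted_series.
  set (c := b n / INR n) in *. set (y := INR n / b n * x).
  assert (Hc : 0 < c <= 1) by (split; [apply Rdiv_lt_0_compat|]; lra).
  assert (Hxy : x = c * y) by (unfold c, y; field; lra).
  assert (Hy : 0 <= y) by (unfold y; apply Rmult_le_pos; [apply Rdiv_le_0_compat|]; lra).
  assert (S1 : is_series (fun k => sheffer_weight a h p y k * (INR k * c)) (x + c * alpha)).
  { assert (S := is_series_Rscal c _ _ (sheffer_weight_mean y)).
    match type of S with is_series _ ?v =>
      replace (x + c * alpha) with v by (rewrite Hxy; unfold alpha; ring) end.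
    revert S. apply is_series_Rext. intros k. ring. }
  assert (S2 : is_series (fun k => sheffer_weight a h p y k * (INR k * c) ^ 2)
                 (x ^ 2 + c * x * (2 * alpha + delta) + c ^ 2 * gamma)).
  { assert (S := is_series_Rscal (c ^ 2) _ _ (sheffer_weight_second y)).
    match type of S with is_series _ ?v =>
      replace (x ^ 2 + c * x * (2 * alpha + delta) + c ^ 2 * gamma) with v
        by (rewrite Hxy; unfold alpha, delta, gamma; ring) end.
    revert S. apply is_series_Rext. intros k. ring. }
  assert (Hw : forall k, 0 <= sheffer_weight a h p y k).
  { intros k. unfold sheffer_weight. apply Rmult_le_pos; [|now apply Hp_nonneg].
    apply Rdiv_le_0_compat; [left; apply exp_pos | lra]. }
  assert (Ht : forall k, 0 <= INR k * c) by (intros k; apply Rmult_le_pos; [apply pos_INR | lra]).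
  eapply Rle_trans; [exact (weighted_series_error_le _ _ f x l M (e * rho x) Q _ _ Hw Ht
                             (sheffer_weight_sum y) S1 S2 HM (fun s Hs => HQ s x Hs Hx))|].
  replace (x ^ 2 + c * x * (2 * alpha + delta) + c ^ 2 * gamma - 2 * x * (x + c * alpha) + x ^ 2)
    with (c * x * delta + c ^ 2 * gamma) by ring.
  replace (x ^ 2 + c * x * (2 * alpha + delta) + c ^ 2 * gamma - x ^ 2)
    with (c * x * (2 * alpha + delta) + c ^ 2 * gamma) by ring.
  apply quadratic_moment_error_le; assumption.
Qed.

End Sheffer.

Theorem theorem3p4
  (a h : nat -> R) (R0 : R) (p : nat -> R -> R) (b : nat -> R)
  (HR0 : 1 < R0)
  (Ha_rad : Rbar_le (Finite R0) (CV_radius a))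
  (Hh_rad : Rbar_le (Finite R0) (CV_radius h))
  (Ha0 : a 0%nat <> 0)
  (Hh0 : h 0%nat = 0)
  (Hh1 : h 1%nat <> 0)
  (Hp_gen : forall x t, Rabs t < R0 ->
      is_series (fun k => p k x * t ^ k) (PSeries a t * exp (x * PSeries h t)))
  (Hp_nonneg : forall k x, 0 <= x -> 0 <= p k x)
  (HA1 : PSeries a 1 <> 0)
  (HH'1 : is_derive (PSeries h) 1 1)
  (Hb_pos : forall n, 0 < b n)
  (Hb_incr : forall n, b n <= b (S n))
  (Hb_inf : is_lim_seq b p_infty)
  (Hb_n : is_lim_seq (fun n => b n / INR n) 0)
  (f : R -> R) (Hf : C_rho_k f) :
  forall eps : R, 0 < eps ->
    exists N : nat, forall n : nat, (N <= n)%nat ->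
      Rbar_le (rho_norm (fun x => T_star a h p b n f x - f x)) (Finite eps).
Proof.
  intros eps Heps.
  destruct (T_star_error_le a h R0 p HR0 Ha_rad Hh_rad Hp_gen Hp_nonneg HA1 HH'1 b Hb_pos
              f Hf (eps / 2)) as [K [HK Herr]]; [lra|].
  set (d := Rmin 1 (eps / 2 / (K + 1))).
  assert (Hd : 0 < d) by (apply Rmin_glb_lt; [lra | apply Rdiv_lt_0_compat; lra]).
  assert (Hd1 : d <= 1 /\ d <= eps / 2 / (K + 1)) by (split; [apply Rmin_l | apply Rmin_r]).
  apply is_lim_seq_spec in Hb_n. destruct (Hb_n (mkposreal d Hd)) as [N HN].
  exists (max N 1). intros n Hn.
  specialize (HN n ltac:(lia)). simpl in HN. rewrite Rminus_0_r in HN.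
  pose proof (Hb_pos n). assert (0 < INR n) by (apply lt_0_INR; lia).
  assert (Hc : 0 < b n / INR n <= d).
  { split; [apply Rdiv_lt_0_compat; lra|]. pose proof (Rle_abs (b n / INR n)). lra. }
  assert (HcK : b n / INR n * K <= eps / 2).
  { apply (Rle_trans _ (eps / 2 / (K + 1) * (K + 1))); [|right; field; lra].
    assert (b n / INR n * (K + 1) <= eps / 2 / (K + 1) * (K + 1)) by (apply Rmult_le_compat_r; lra).
    nra. }
  apply rho_norm_le. intros x Hx.
  eapply Rle_trans; [apply Herr; [lia | lra | exact Hx]|].
  apply Rmult_le_compat_r; [pose proof (rho_ge_1 x); lra | lra].
Qed.
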